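(* Let the sequences be generated by Algorithm iMBA and suppose Assumptions 2 and 3 hold. Then $\omega(x^0)$ is nonempty and compact, and $\lim_{k\to\infty}\|x^k-\overline x^k\|=0$ and $\lim_{k\to\infty}\|x^{k+1}-\overline x^k\|=0$.
   Context: Problem (P): $\min_{x\in\mathbb{R}^n}F(x):=g_0(x)+\delta_{\mathbb{R}^m_-}(g(x))+\phi(x)$, where $g=(g_1,\dots,g_m)^\top$ and $\delta_{\mathbb{R}^m_-}$ is the indicator of the nonpositive orthant. Assumption 1 (standing): (i) $g_0:\mathbb{R}^n\to(-\infty,\infty]$ is locally Lipschitz and upper-$\mathcal C^2$ at every point of an open convex set $\mathcal O\supset\Gamma:=\{x:g(x)\in\mathbb{R}^m_-\}\neq\emptyset$, and each $g_i:\mathbb{R}^n\to\mathbb{R}$, $i\in[m]$, is locally Lipschitz and upper-$\mathcal C^2$ at every point of $\mathbb{R}^n$; (ii) $\phi:\mathbb{R}^n\to\mathbb{R}$ is convex and $F$ is bounded below on $\Gamma$. $\partial$ denotes the limiting subdifferential; $\partial g(x):=\{V\in\mathbb{R}^{n\times m}: V_i\in\partial g_i(x)\ \forall i\}$. Define $G(x,s,V,L):=g(s)+V^\top(x-s)+\tfrac12\|x-s\|^2L$. Algorithm iMBA (parameters $0<\mu_{\min}\le\mu_{\max}$, $0<L_{\min}\le L_{\max}$, $M,\beta_C,\beta_S,\alpha>0$, $\tau>1$, $x^0\in\Gamma$): at iteration $k$ choose $\xi^k\in\partial g_0(x^k)$, $V^k\in\partial g(x^k)$, $\mu_{k,0}\in[\mu_{\min},\mu_{\max}]$,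 $L^{k,0}\in[L_{\min},L_{\max}]^m$; for $j=0,1,\dots$ choose self-adjoint $\mathcal Q_{k,j}$ with $\mu_{k,j}\mathcal I\preceq\mathcal Q_{k,j}\preceq(\mu_{k,j}+M)\mathcal I$, let $F_{k,j}(x):=g_0(x^k)+\langle\xi^k,x-x^k\rangle+\frac12\langle x-x^k,\mathcal Q_{k,j}(x-x^k)\rangle+\phi(x)$, $\Gamma_{k,j}:=\{x:G(x,x^k,V^k,L^{k,j})\in\mathbb{R}^m_-\}$, $\overline x^{k,j}$ the unique minimizer of $F_{k,j}$ on $\Gamma_{k,j}$, and compute $y^{k,j}$, $v^{k,j}\in\partial\phi(y^{k,j})$, $\lambda^{k,j}\in\mathbb{R}^m_+$ with $F_{k,j}(y^{k,j})\le F_{k,j}(x^k)$, $(-\langle\lambda^{k,j},G(y^{k,j},x^k,V^k,L^{k,j})\rangle)_++\|[G(y^{k,j},x^k,V^k,L^{k,j})]_+\|_\infty\le\frac{\beta_C}2\|y^{k,j}-x^k\|^2$ and $\|\xi^k+\mathcal Q_{k,j}(y^{k,j}-x^k)+v^{k,j}+V^k\lambda^{k,j}+\langle L^{k,j},\lambda^{k,j}\rangle(y^{k,j}-x^k)\|\le\beta_S\|y^{k,j}-x^k\|$. If $g(y^{k,j})\in\mathbb{R}^m_-$ and $F(y^{k,j})\le F(x^k)-\frac\alpha2\|y^{k,j}-x^k\|^2$, accept ($j_k:=j$); else if $g(y^{k,j})\notin\mathbb{R}^m_-$ set $L^{k,j+1}=\tau L^{k,j}$, $\mu_{k,j+1}=\mu_{k,j}$;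 else $L^{k,j+1}=L^{k,j}$, $\mu_{k,j+1}=\tau\mu_{k,j}$. Then $x^{k+1}:=y^{k,j_k}$, $(\mu_k,\mathcal Q_k,L^k,v^{k+1},\lambda^{k+1}):=(\mu_{k,j_k},\mathcal Q_{k,j_k},L^{k,j_k},v^{k,j_k},\lambda^{k,j_k})$, $\overline x^k:=\overline x^{k,j_k}$. Assumption 2: for each $k,j$, the multifunction $x\mapsto G(x,x^k,V^k,L^{k,j})-\mathbb{R}^m_-$ is metrically subregular at $(\overline x^{k,j},0)$. Assumption 3: $\{x^k\}$ is bounded; $\omega(x^0)$ denotes its set of cluster points. *)

From HB Require Import structures.
From mathcomp Require Import all_boot all_order all_algebra.
From mathcomp Require Import all_classical all_reals all_analysis.
Set Implicit Arguments. Unset Strict Implicit. Unset Printing Implicit Defensive.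
Import Order.TTheory GRing.Theory Num.Theory.
Import numFieldNormedType.Exports.
Local Open Scope classical_set_scope.
Local Open Scope ring_scope.

Section Defs.
Variables (R : realType) (n m : nat).

Definition dotv (p : nat) (a b : 'cV[R]_p) : R := \sum_i a i 0 * b i 0.
Definition enorm (p : nat) (a : 'cV[R]_p) : R := Num.sqrt (dotv a a).

Definition posinf_norm (p : nat) (w : 'cV[R]_p) : R :=
  \big[Num.max/0]_(i < p) Num.max (w i 0) 0.

Definition nonpos (p : nat) (w : 'cV[R]_p) : Prop := forall i, w i 0 <= 0.

Definition ebasis (i : 'I_n) : 'cV[R]_n := delta_mx i 0.

Definition open_ball (x : 'cV[R]_n) (d : R) : set 'cV[R]_n :=
  [set z | enorm (z - x) < d].

Definition cvx_set (O : set 'cV[R]_n) : Prop :=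
  forall x y (t : R), O x -> O y -> 0 <= t <= 1 -> O (t *: x + (1 - t) *: y).

Definition cvx_fun (f : 'cV[R]_n -> R) : Prop :=
  forall x y (t : R), 0 <= t <= 1 ->
    f (t *: x + (1 - t) *: y) <= t * f x + (1 - t) * f y.

Definition loc_lipschitz_at (f : 'cV[R]_n -> \bar R) (x : 'cV[R]_n) : Prop :=
  exists2 d : R, 0 < d & exists Lc : R, forall z w,
    open_ball x d z -> open_ball x d w ->
    f z \is a fin_num /\ `| fine (f z) - fine (f w) | <= Lc * enorm (z - w).

(* upper-C^2 at x (Rockafellar--Wets, Def. 10.29, with max replaced by min):
   on a neighbourhood of x, f is the pointwise minimum over a nonempty compact
   parameter set K of functions h t of class C^2, with h t z, the partial
   derivatives and the second partial derivatives jointly continuous in (t,z). *)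
Definition upperC2_at (f : 'cV[R]_n -> \bar R) (x : 'cV[R]_n) : Prop :=
  exists2 d : R, 0 < d &
  exists (T : topologicalType) (K : set T) (h : T -> 'cV[R]_n -> R),
    [/\ compact K, K !=set0,
      (forall z, open_ball x d z ->
          (exists2 t, K t & f z = (h t z)%:E) /\
          (forall t, K t -> (f z <= (h t z)%:E)%E)),
      (forall t z, K t -> open_ball x d z -> forall i j,
          derivable (h t) z (ebasis i) /\
          derivable (fun w => 'D_(ebasis i) (h t) w) z (ebasis j)) &
      [/\ {within K `*` open_ball x d, continuous (fun p => h p.1 p.2)},
          (forall i, {within K `*` open_ball x d,
             continuous (fun p => 'D_(ebasis i) (h p.1) p.2)}) &
          (forall i j, {within K `*` open_ball x d,
             continuous (fun p => 'D_(ebasis j) (fun w => 'D_(ebasis i) (h p.1) w) p.2)})]].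

(* Frechet (regular) subdifferential: liminf_{z->x} (f z - f x - <v,z-x>)/|z-x| >= 0 *)
Definition frechet_subdiff (f : 'cV[R]_n -> \bar R) (x v : 'cV[R]_n) : Prop :=
  f x \is a fin_num /\
  forall eps : R, 0 < eps -> exists2 d : R, 0 < d & forall z, open_ball x d z ->
    ((fine (f x) + dotv v (z - x) - eps * enorm (z - x))%:E <= f z)%E.

Definition limiting_subdiff (f : 'cV[R]_n -> \bar R) (x v : 'cV[R]_n) : Prop :=
  f x \is a fin_num /\
  exists (z w : nat -> 'cV[R]_n),
    [/\ forall j, frechet_subdiff f (z j) (w j),
        (fun j => enorm (z j - x)) @ \oo --> 0,
        (fun j => fine (f (z j))) @ \oo --> fine (f x) &
        (fun j => enorm (w j - v)) @ \oo --> 0].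

Definition dist_set (p : nat) (a : 'cV[R]_p) (A : set 'cV[R]_p) : R :=
  inf [set enorm (a - b) | b in A].

Definition metric_subregular (S : 'cV[R]_n -> set 'cV[R]_m)
    (xb : 'cV[R]_n) (yb : 'cV[R]_m) : Prop :=
  S xb yb /\
  exists2 kappa : R, 0 < kappa & exists2 d : R, 0 < d & forall x, open_ball xb d x ->
    dist_set x [set z | S z yb] <= kappa * dist_set yb (S x).

Definition gvec (g : 'I_m -> 'cV[R]_n -> R) (x : 'cV[R]_n) : 'cV[R]_m :=
  \col_i g i x.

Definition Gmodel (g : 'I_m -> 'cV[R]_n -> R) (x s : 'cV[R]_n)
    (V : 'M[R]_(n, m)) (L : 'cV[R]_m) : 'cV[R]_m :=
  gvec g s + V^T *m (x - s) + (enorm (x - s) ^+ 2 / 2) *: L.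

Definition Fobj (g0 : 'cV[R]_n -> \bar R) (g : 'I_m -> 'cV[R]_n -> R)
    (phi : 'cV[R]_n -> R) (x : 'cV[R]_n) : \bar R :=
  (g0 x + (if `[< nonpos (gvec g x) >] then 0 else +oo) + (phi x)%:E)%E.

Definition Fsub (g0xk : R) (xk xi : 'cV[R]_n) (Q : 'M[R]_n)
    (phi : 'cV[R]_n -> R) (x : 'cV[R]_n) : R :=
  g0xk + dotv xi (x - xk) + dotv (x - xk) (Q *m (x - xk)) / 2 + phi x.

Definition cluster_points (x : nat -> 'cV[R]_n) : set 'cV[R]_n :=
  [set p | forall eps : R, 0 < eps -> forall N, exists2 k, (N <= k)%N & enorm (x k - p) < eps].

End Defs.

From HB Require Import structures.
From mathcomp Require Import all_boot all_order all_algebra.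
From mathcomp Require Import all_classical all_reals all_analysis.
From mathcomp.algebra_tactics Require Import ring lra.
Import Order.TTheory GRing.Theory Num.Theory.
Import numFieldNormedType.Exports.
Local Open Scope classical_set_scope.
Local Open Scope ring_scope.

(* Each accepted step is feasible and decreases F by alpha/2 |x^{k+1} - x^k|^2,
   and F is bounded below on the feasible set, so the decreases are summable and
   the steps vanish.  Comparing the accepted inexact solution x^{k+1} of the
   subproblem with its exact solution xbar^k via the strong convexity of F_{k,j}
   (modulus mu_min) and the approximate KKT conditions gives
     mu_min/2 e^2 <= (F(x^k) - F(x^{k+1})) + 2 Lc d + beta_C/2 d^2 + beta_S d e,
   with d = |x^{k+1} - x^k|, e = |x^{k+1} - xbar^k| and Lc a Lipschitz constant of
   g0 around x^k.  Such a constant is only local, so e is shown to be small near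
   each cluster point of the bounded iterates; cluster points are feasible, hence
   in the open set where g0 is locally Lipschitz. *)

Section EuclideanNorm.
Context {R : realType} {n : nat}.
Implicit Types (a b c : 'cV[R]_n).

Lemma dotvC a b : dotv a b = dotv b a.
Proof. by rewrite /dotv; apply: eq_bigr => i _; rewrite mulrC. Qed.

Lemma dotvDl a b c : dotv (a + b) c = dotv a c + dotv b c.
Proof. by rewrite /dotv -big_split; apply: eq_bigr => i _; rewrite mxE mulrDl. Qed.

Lemma dotvDr a b c : dotv a (b + c) = dotv a b + dotv a c.
Proof. by rewrite dotvC dotvDl !(dotvC a). Qed.

Lemma dotvZl t a b : dotv (t *: a) b = t * dotv a b.
Proof. by rewrite /dotv mulr_sumr; apply: eq_bigr => i _; rewrite mxE mulrA. Qed.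

Lemma dotvZr t a b : dotv a (t *: b) = t * dotv a b.
Proof. by rewrite dotvC dotvZl dotvC. Qed.

Lemma dotvNl a b : dotv (- a) b = - dotv a b.
Proof. by rewrite -scaleN1r dotvZl mulN1r. Qed.

Lemma dotvBl a b c : dotv (a - b) c = dotv a c - dotv b c.
Proof. by rewrite dotvDl dotvNl. Qed.

Lemma dotvBr a b c : dotv a (b - c) = dotv a b - dotv a c.
Proof. by rewrite dotvC dotvBl !(dotvC a). Qed.

Lemma dotv0l a : dotv 0 a = 0.
Proof. by rewrite /dotv big1 // => i _; rewrite mxE mul0r. Qed.

Lemma dotv0r a : dotv a 0 = 0.
Proof. by rewrite dotvC dotv0l. Qed.

Lemma dotv_ge0 a : 0 <= dotv a a.
Proof. by rewrite /dotv sumr_ge0 // => i _; rewrite -expr2 sqr_ge0. Qed.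

Lemma dotv_eq0 a : dotv a a = 0 -> a = 0.
Proof.
move=> /eqP; rewrite /dotv psumr_eq0; last by move=> i _; rewrite -expr2 sqr_ge0.
move=> /allP H; apply/matrixP => i j; rewrite ord1 mxE.
by have := H i (mem_index_enum _); rewrite -expr2 sqrf_eq0 => /eqP.
Qed.

Lemma dotv_mulmx m (M : 'M[R]_(n, m)) a (b : 'cV[R]_m) :
  dotv a (M *m b) = dotv (M^T *m a) b.
Proof.
rewrite /dotv.
under eq_bigr do rewrite mxE mulr_sumr.
under [RHS]eq_bigr do rewrite mxE mulr_suml.
rewrite exchange_big /=; apply: eq_bigr => j _; apply: eq_bigr => i _.
by rewrite mxE mulrCA mulrA.
Qed.

Lemma enorm_ge0 a : 0 <= enorm a.
Proof. exact: sqrtr_ge0. Qed.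

Lemma enorm_sqr a : enorm a ^+ 2 = dotv a a.
Proof. by rewrite sqr_sqrtr // dotv_ge0. Qed.

Lemma enorm0 : enorm (0 : 'cV[R]_n) = 0.
Proof. by rewrite /enorm dotv0l sqrtr0. Qed.

Lemma enorm_gt0 a : a != 0 -> 0 < enorm a.
Proof.
move=> a0; rewrite lt0r enorm_ge0 andbT; apply: contra a0 => /eqP a0.
by apply/eqP/dotv_eq0; rewrite -enorm_sqr a0 expr0n.
Qed.

Lemma dotv_sqr_le a b : dotv a b ^+ 2 <= dotv a a * dotv b b.
Proof.
have [b0|b0] := eqVneq (dotv b b) 0.
  by rewrite (dotv_eq0 _ b0) dotv0r expr0n /= mulr_ge0 ?dotv_ge0.
(* expand [0 <= |a - t b|^2] at the minimiser [t = <a,b> / |b|^2] *)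
have := dotv_ge0 (a - dotv a b / dotv b b *: b).
rewrite !(dotvBl, dotvBr, dotvZl, dotvZr) (dotvC b a).
set A := dotv a a; set B := dotv b b; set C := dotv a b.
have -> : A - C / B * C - C / B * (C - C / B * B) = A - C ^+ 2 / B.
  by rewrite /B; field; rewrite b0.
by rewrite subr_ge0 ler_pdivrMr // lt0r b0 dotv_ge0.
Qed.

Lemma norm_dotv_le a b : `|dotv a b| <= enorm a * enorm b.
Proof.
rewrite /enorm -sqrtrM ?dotv_ge0 // -sqrtr_sqr ler_sqrt ?mulr_ge0 ?dotv_ge0 //.
exact: dotv_sqr_le.
Qed.

Lemma enormD a b : enorm (a + b) <= enorm a + enorm b.
Proof.
rewrite -(@ler_sqr _ (enorm (a + b))) ?nnegrE ?addr_ge0 ?enorm_ge0 //.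
rewrite enorm_sqr sqrrD !(dotvDl, dotvDr) (dotvC b a) -!enorm_sqr.
have := le_trans (ler_norm _) (norm_dotv_le a b).
set C := dotv a b; set X := enorm a; set Y := enorm b => HC.
rewrite mulr2n; lra.
Qed.

Lemma enormZ t a : enorm (t *: a) = `|t| * enorm a.
Proof.
by rewrite /enorm dotvZl dotvZr mulrA -expr2 sqrtrM ?sqr_ge0 // sqrtr_sqr.
Qed.

Lemma enormN a : enorm (- a) = enorm a.
Proof. by rewrite -scaleN1r enormZ normrN normr1 mul1r. Qed.

Lemma enorm_distC a b : enorm (a - b) = enorm (b - a).
Proof. by rewrite -enormN opprB. Qed.

Lemma enorm_dist_triangle a b c : enorm (a - c) <= enorm (a - b) + enorm (b - c).
Proof. by rewrite (le_trans _ (enormD _ _)) // addrA subrK. Qed.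

Lemma norm_entry_le_enorm a i : `|a i 0| <= enorm a.
Proof.
rewrite /enorm -sqrtr_sqr ler_sqrt ?dotv_ge0 // /dotv (bigD1 i) //= expr2 lerDl.
by rewrite sumr_ge0 // => j _; rewrite -expr2 sqr_ge0.
Qed.

Lemma enorm_le_entries a (d : R) : 0 <= d -> (forall i, `|a i 0| <= d) ->
  enorm a <= Num.sqrt (n%:R) * d.
Proof.
move=> d0 Ha; rewrite /enorm -(ger0_norm d0) -sqrtr_sqr -sqrtrM ?ler0n //.
rewrite ler_sqrt ?mulr_ge0 ?sqr_ge0 ?ler0n // /dotv.
apply: le_trans (_ : \sum_(i < n) d ^+ 2 <= _); last first.
  by rewrite sumr_const card_ord mulr_natl.
apply: ler_sum => i _; rewrite -expr2 -real_normK ?num_real //.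
by rewrite ler_sqr ?nnegrE // ger0_norm.
Qed.

Lemma dotv_le0 m (l w : 'cV[R]_m) :
  (forall i, 0 <= l i 0) -> nonpos w -> dotv l w <= 0.
Proof. by move=> l0 w0; apply: sumr_le0 => i _; rewrite mulr_ge0_le0. Qed.

End EuclideanNorm.

Section BoundedSequences.
Context {R : realType} {n : nat}.
Implicit Types (x : nat -> 'cV[R]_n) (p : 'cV[R]_n).

Lemma nbhs_enorm_lt p (eps : R) : 0 < eps -> nbhs p [set z | enorm (z - p) < eps].
Proof.
move=> eps0; apply/nbhs_ballP.
set s := Num.sqrt (n%:R : R).
have s1 : 0 < s + 1 by rewrite ltr_wpDl ?sqrtr_ge0.
have d0 : 0 < eps / (s + 1) by rewrite divr_gt0.
exists (eps / (s + 1)) => // z [_ Hz] /=.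
apply: le_lt_trans (enorm_le_entries _ _ (ltW d0) _) _.
- by move=> i; rewrite !mxE distrC; apply: ltW; exact: Hz.
- by rewrite mulrA ltr_pdivrMr // mulrDr mulr1 [s * _]mulrC ltrDl.
Qed.

Definition cube (c : R) : set 'cV[R]_n := [set z | forall i, `|z i 0| <= c].

Lemma compact_cube c : compact (cube c).
Proof.
pose side := [set v : 'rV[R]_n | forall i, `[- c, c]%classic (v ord0 i)].
have -> : cube c = (fun v : 'rV[R]_n => v^T) @` side.
  apply/seteqP; split => z /=.
    move=> Hz; exists z^T; last by rewrite trmxK.
    by move=> i; rewrite mxE /= in_itv /= -ler_norml.
  move=> [v Hv <-] i; rewrite mxE.
  by have := Hv i; rewrite /= in_itv /= -ler_norml ord1.
apply: continuous_compact; last first.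
  exact: (@rV_compact R n (fun _ => `[- c, c]%classic) (fun _ => @segment_compact R _ _)).
apply: continuous_subspaceT => v B /nbhs_ballP [e e0 HB].
apply/nbhs_ballP; exists e => // w [_ Hw]; apply: HB.
by split => // i j; rewrite !mxE; exact: Hw.
Qed.

(* The cluster point comes from the compactness of the cube against the filter
   of cofinite subsets of [S]. *)
Lemma bounded_cluster_along {x} {c : R} (S : set nat) :
  (forall k, enorm (x k) <= c) -> (forall N, exists2 k, (N <= k)%N & S k) ->
  exists2 p, cube c p & forall eps, 0 < eps -> forall N,
    exists k, [/\ (N <= k)%N, S k & enorm (x k - p) < eps].
Proof.
move=> xc HS.
pose G := [set P : set nat | exists N, forall k, (N <= k)%N -> S k -> P k].
have FG : Filter G.
  constructor.
  - by exists 0%N.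
  - move=> P P' [N1 H1] [N2 H2]; exists (maxn N1 N2) => k Hk Sk.
    by split; [apply: H1|apply: H2] => //; apply: leq_trans Hk; rewrite ?leq_maxl ?leq_maxr.
  - by move=> P P' PP' [N H]; exists N => k Hk Sk; apply/PP'/H.
have PG : ProperFilter G.
  apply: Build_ProperFilter_ex => P [N H].
  by have [k Hk Sk] := HS N; exists k; apply: H.
have [p [cp Cp]] : cube c `&` cluster (fmap x G) !=set0.
  apply: compact_cube; exists 0%N => k _ _ i.
  exact: le_trans (norm_entry_le_enorm _ _) (xc k).
exists p => // eps e0 N.
have FA : (fmap x G) [set z | exists k, [/\ (N <= k)%N, S k & z = x k]].
  by exists N => k Hk Sk /=; exists k.
have [z [[k [Hk Sk ->]] Hz]] := Cp _ _ FA (nbhs_enorm_lt p _ e0).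
by exists k.
Qed.

Lemma cluster_points_neq0 {x} {c : R} :
  (forall k, enorm (x k) <= c) -> cluster_points x !=set0.
Proof.
move=> xc.
have [p _ Hp] := bounded_cluster_along setT xc (fun N => ex_intro2 _ _ N (leqnn N) I).
by exists p => eps e0 N; have [k [Hk _ ?]] := Hp eps e0 N; exists k.
Qed.

Lemma compact_cluster_points {x} {c : R} :
  (forall k, enorm (x k) <= c) -> compact (cluster_points x).
Proof.
move=> xc; apply: (subclosed_compact _ (compact_cube c)).
  move=> p Hp eps e0 N.
  have e2 : 0 < eps / 2 by rewrite divr_gt0.
  have [q [Hq Hqp]] := Hp _ (nbhs_enorm_lt p _ e2).
  have [k Hk Hxk] := Hq (eps / 2) e2 N.
  exists k => //; apply: le_lt_trans (enorm_dist_triangle _ q _) _.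
  by rewrite /= in Hqp; rewrite [eps]splitr ltrD.
move=> p Hp i; apply: le_trans (norm_entry_le_enorm p i) _.
apply/ler_addgt0Pr => e e0; have [k _ Hk] := Hp e e0 0%N.
have := enorm_dist_triangle p (x k) 0; rewrite !subr0 enorm_distC.
by have := xc k; lra.
Qed.

(* If [eps <= u k] infinitely often, these indices give a subsequence of [x]
   accumulating at a cluster point, near which [u] is eventually small. *)
Lemma cvg0_of_cluster_points {x} {c : R} {u : nat -> R} :
  (forall k, enorm (x k) <= c) -> (forall k, 0 <= u k) ->
  (forall p, cluster_points x p -> forall eps, 0 < eps ->
     exists2 r, 0 < r & \forall k \near \oo, enorm (x k - p) < r -> u k < eps) ->
  u @ \oo --> 0.
Proof.
move=> xc u0 Hloc; apply/cvgr0Pnorm_lt => eps e0.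
apply: contrapT => Hno.
have HS : forall N, exists2 k, (N <= k)%N & eps <= u k.
  move=> N; apply: contrapT => H; apply: Hno; exists N => // k /= Hk.
  by rewrite ger0_norm // ltNge; apply/negP => Hk'; apply: H; exists k.
have [p _ Hp] := bounded_cluster_along [set k | eps <= u k] xc HS.
have cp : cluster_points x p.
  by move=> e e1 N; have [k [Hk _ ?]] := Hp e e1 N; exists k.
have [r r0 [N _ HN]] := Hloc p cp eps e0.
have [k [Hk Sk Hxk]] := Hp r r0 N.
by have := HN k Hk Hxk; rewrite ltNge Sk.
Qed.

End BoundedSequences.

Lemma cvgr0_ge0_lt {R : realType} {T : Type} {F : set_system T} {FF : Filter F}
    {f : T -> R} :
  (forall t, 0 <= f t) -> f @ F --> 0 ->
  forall eps, 0 < eps -> \forall t \near F, f t < eps.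
Proof.
by move=> f0 /cvgr0_norm_lt f_lt eps e0; apply: filterS (f_lt _ e0) => t; rewrite ger0_norm.
Qed.

Section Subdifferentials.
Context {R : realType} {n : nat}.

Lemma frechet_subdiff_cvx_ineq {phi : 'cV[R]_n -> R} {z w} : cvx_fun phi ->
  frechet_subdiff (fun x => (phi x)%:E) z w ->
  forall u, phi z + dotv w (u - z) <= phi u.
Proof.
move=> phi_cvx [_ Hf] u.
set D := enorm (u - z).
have D0 : 0 <= D := enorm_ge0 _.
apply/ler_addgt0Pr => e e0.
set eps := e / (D + 1).
have eps0 : 0 < eps by rewrite divr_gt0 // ltr_wpDl.
have epsD : eps * D <= e.
  by rewrite /eps mulrAC ler_pdivrMr ?ltr_wpDl // mulrDr mulr1 lerDl ltW.
have [d d0 Hd] := Hf eps eps0.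
(* move from z towards u by a step [t] short enough to stay in the Frechet ball *)
set t := d / (d + D).
have dD : 0 < d + D by lra.
have t0 : 0 < t by rewrite divr_gt0.
have t0w := ltW t0.
have t1 : t <= 1 by rewrite ler_pdivrMr ?dD // mul1r lerDl.
have Hzt : t *: u + (1 - t) *: z - z = t *: (u - z).
  by rewrite scalerBl scale1r scalerBr addrCA [LHS]addrC addKr.
have Hin : open_ball z d (t *: u + (1 - t) *: z).
  rewrite /open_ball /= Hzt enormZ ger0_norm // -/D /t.
  rewrite mulrAC ltr_pdivrMr ?dD //; nra.
have := Hd _ Hin; rewrite lee_fin /= Hzt dotvZr enormZ ger0_norm // -/D.
have := phi_cvx u z t; rewrite t0w /= t1 => /(_ isT) Hcv Hfr.
have : t * (phi z + dotv w (u - z) - eps * D) <= t * phi u.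
  have : phi z + t * dotv w (u - z) - eps * (t * D) <= t * phi u + (1 - t) * phi z.
    exact: le_trans Hfr Hcv.
  by move=> H; nra.
by rewrite ler_pM2l // => H; lra.
Qed.

Lemma limiting_subdiff_cvx_ineq {phi : 'cV[R]_n -> R} {y v} : cvx_fun phi ->
  limiting_subdiff (fun x => (phi x)%:E) y v ->
  forall u, phi y + dotv v (u - y) <= phi u.
Proof.
move=> phi_cvx [_ [z [w [Hfr Hz Hphi Hw]]]] u.
apply/ler_addgt0Pr => e e0.
set K := enorm (u - y) + 1.
have K0 : 0 < K by rewrite ltr_wpDl // enorm_ge0.
set V := enorm v + 1.
have V0 : 0 < V by rewrite ltr_wpDl // enorm_ge0.
set a := Num.min 1 (Num.min (e / (3 * K)) (e / (3 * V))).
have a0 : 0 < a by rewrite !lt_min ltr01 !divr_gt0 ?mulr_gt0.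
have a1 : a <= 1 by rewrite ge_min lexx.
have aK : a * K <= e / 3.
  rewrite -ler_pdivlMr // -mulrA -invfM.
  by rewrite /a !ge_min lexx orbT.
have aV : a * V <= e / 3.
  rewrite -ler_pdivlMr // -mulrA -invfM.
  by rewrite /a !ge_min lexx !orbT.
have e3 : 0 < e / 3 by rewrite divr_gt0.
near \oo => j.
have h1 : enorm (z j - y) < a.
  by near: j; exact: cvgr0_ge0_lt (fun _ => enorm_ge0 _) Hz _ a0.
have h2 : `|phi y - phi (z j)| < e / 3.
  by near: j; move/cvgr_dist_lt: Hphi => /(_ _ e3); apply: filterS.
have h3 : enorm (w j - v) < a.
  by near: j; exact: cvgr0_ge0_lt (fun _ => enorm_ge0 _) Hw _ a0.
have Hj := frechet_subdiff_cvx_ineq phi_cvx (Hfr j) u.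
have E : dotv v (u - y) - dotv (w j) (u - z j)
         = dotv (v - w j) (u - z j) + dotv v (z j - y).
  by rewrite !dotvBl !dotvBr; ring.
have B1 : dotv (v - w j) (u - z j) <= a * K.
  apply: le_trans (ler_norm _) _; apply: le_trans (norm_dotv_le _ _) _.
  apply: ler_pM; rewrite ?enorm_ge0 //; first by rewrite enorm_distC ltW.
  apply: le_trans (enorm_dist_triangle _ y _) _; rewrite /K lerD2l enorm_distC.
  exact: ltW (lt_le_trans h1 a1).
have B2 : dotv v (z j - y) <= a * V.
  apply: le_trans (ler_norm _) _; apply: le_trans (norm_dotv_le _ _) _.
  rewrite [a * V]mulrC /V; apply: ler_pM; rewrite ?enorm_ge0 ?lerDl //.
  exact: ltW h1.
have B3 : phi y - phi (z j) <= e / 3 by apply: le_trans (ler_norm _) (ltW h2).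
lra.
Unshelve. all: end_near.
Qed.

Section LipschitzBall.
Context {f : 'cV[R]_n -> \bar R} {p : 'cV[R]_n} {r Lc : R}.
Hypothesis f_lip : forall a b, open_ball p r a -> open_ball p r b ->
  f a \is a fin_num /\ `|fine (f a) - fine (f b)| <= Lc * enorm (a - b).

Lemma frechet_subdiff_lip_le z w eps : open_ball p r z ->
  frechet_subdiff f z w -> 0 < eps -> enorm w <= `|Lc| + eps.
Proof.
move=> Hz [_ Hf] e0.
have [->|w0] := eqVneq w 0; first by rewrite enorm0 addr_ge0 // ltW.
set W := enorm w.
have W0 : 0 < W by exact: enorm_gt0.
have [d d0 Hd] := Hf eps e0.
set rho := r - enorm (z - p).
have rho0 : 0 < rho by rewrite subr_gt0.
set mm := Num.min d rho.
have mm0 : 0 < mm by rewrite lt_min d0.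
(* test the Frechet inequality at [z + s w], a point at distance [mm / 2] *)
set s := mm / (2 * W).
have s0 : 0 < s by rewrite divr_gt0 ?mulr_gt0.
have s0w := ltW s0.
have sW : s * W = mm / 2 by rewrite /s; field; rewrite gt_eqF.
set zz := z + s *: w.
have Hzs : zz - z = s *: w by rewrite /zz addrC addKr.
have Hzz : enorm (zz - z) = mm / 2 by rewrite Hzs enormZ ger0_norm.
have mm2 : mm / 2 < mm by rewrite ltr_pdivrMr // ltr_pMr // ltr1n.
have mmd : mm / 2 < d by apply: lt_le_trans mm2 _; rewrite ge_min lexx.
have mmr : mm / 2 < rho by apply: lt_le_trans mm2 _; rewrite ge_min lexx orbT.
have Hin : open_ball p r zz.
  rewrite /open_ball /=; apply: le_lt_trans (enorm_dist_triangle _ z _) _.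
  by rewrite Hzz -ltrBrDr.
have [fzz Hlip] := f_lip _ _ Hin Hz.
have := Hd zz; rewrite /open_ball /= Hzz => /(_ mmd).
rewrite -(fineK fzz) lee_fin Hzs dotvZr -enorm_sqr -/W -sW => H.
have Hl : fine (f zz) - fine (f z) <= `|Lc| * (s * W).
  apply: le_trans (ler_norm _) _; apply: le_trans Hlip _.
  by rewrite Hzz -sW; apply: ler_wpM2r; rewrite ?ler_norm // mulr_ge0 // ltW.
have : s * W * W <= s * W * (`|Lc| + eps).
  move: H Hl; rewrite expr2 mulrA.
  set P := s * W; set A := fine (f zz); set B := fine (f z).
  rewrite mulrDr (mulrC P `|Lc|) (mulrC P eps); lra.
by rewrite ler_pM2l // mulr_gt0.
Qed.

Lemma limiting_subdiff_lip_le z w : open_ball p r z ->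
  limiting_subdiff f z w -> enorm w <= `|Lc|.
Proof.
move=> Hx [_ [zj [wj [Hfr Hz _ Hw]]]].
apply/ler_addgt0Pr => e e0.
have e2 : 0 < e / 2 by rewrite divr_gt0.
have rho0 : 0 < r - enorm (z - p) by rewrite subr_gt0.
near \oo => j.
have h1 : enorm (zj j - z) < r - enorm (z - p).
  by near: j; exact: cvgr0_ge0_lt (fun _ => enorm_ge0 _) Hz _ rho0.
have h3 : enorm (wj j - w) < e / 2.
  by near: j; exact: cvgr0_ge0_lt (fun _ => enorm_ge0 _) Hw _ e2.
have Hzj : open_ball p r (zj j).
  rewrite /open_ball /=; apply: le_lt_trans (enorm_dist_triangle _ z _) _.
  by rewrite -ltrBrDr.
have := frechet_subdiff_lip_le _ _ _ Hzj (Hfr j) e2.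
have := enorm_dist_triangle w (wj j) 0; rewrite !subr0 enorm_distC.
by rewrite [e]splitr; lra.
Unshelve. all: end_near.
Qed.

End LipschitzBall.

Lemma cluster_points_feasible {m} {g : 'I_m -> 'cV[R]_n -> R}
    {x : nat -> 'cV[R]_n} {p : 'cV[R]_n} :
  (forall i z, loc_lipschitz_at (fun w => (g i w)%:E) z) ->
  (forall k, nonpos (gvec g (x k))) -> cluster_points x p -> nonpos (gvec g p).
Proof.
move=> g_lip x_feas px i; rewrite /gvec mxE.
have [r r0 [Lc HLc]] := g_lip i p.
apply/ler_addgt0Pr => e e0; rewrite add0r.
have L1 : 0 < `|Lc| + 1 by rewrite ltr_wpDl.
set del := Num.min r (e / (`|Lc| + 1)).
have del0 : 0 < del by rewrite lt_min r0 divr_gt0.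
have [k _ Hk] := px del del0 0%N.
have Hxk : open_ball p r (x k) by apply: lt_le_trans Hk _; rewrite ge_min lexx.
have Hp : open_ball p r p by rewrite /open_ball /= subrr enorm0.
have [_ /= Hlip] := HLc _ _ Hxk Hp.
have gx := x_feas k i; rewrite /gvec mxE in gx.
have H2 : Lc * enorm (x k - p) <= `|Lc| * del.
  apply: le_trans (_ : `|Lc| * enorm (x k - p) <= _).
    by rewrite ler_wpM2r ?enorm_ge0 // ler_norm.
  by rewrite ler_wpM2l // ltW.
have H3 : `|Lc| * del < e.
  apply: le_lt_trans (_ : `|Lc| * (e / (`|Lc| + 1)) < _).
    by rewrite ler_wpM2l // ge_min lexx orbT.
  by rewrite mulrA ltr_pdivrMr // mulrDr mulr1 mulrC ltrDl.
move: Hlip; rewrite ler_norml => /andP [H4 _].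
move: H4 H2 H3 gx; set A := Lc * _; set B := `|Lc| * del; lra.
Qed.

End Subdifferentials.

Section Subproblem.
Context {R : realType} {n m : nat}.
Implicit Types (g : 'I_m -> 'cV[R]_n -> R) (V : 'M[R]_(n, m)) (L lam : 'cV[R]_m).

Lemma posinf_norm_ge0 (w : 'cV[R]_m) : 0 <= posinf_norm w.
Proof.
rewrite /posinf_norm; elim/big_ind: _ => // [a b a0 b0|i _].
  by rewrite le_max a0.
by rewrite le_max lexx orbT.
Qed.

Lemma Gmodel_center g s V L : Gmodel g s s V L = gvec g s.
Proof. by rewrite /Gmodel subrr mulmx0 addr0 enorm0 expr0n /= mul0r scale0r addr0. Qed.

Lemma dotv_GmodelB g (s y z : 'cV[R]_n) V L lam :
  dotv lam (Gmodel g z s V L) - dotv lam (Gmodel g y s V L) =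
  dotv (V *m lam) (z - y) + dotv L lam * dotv (y - s) (z - y)
  + dotv L lam * (enorm (z - y) ^+ 2 / 2).
Proof.
rewrite /Gmodel.
have -> : z - s = (y - s) + (z - y) by rewrite [RHS]addrC addrA subrK.
set a := y - s; set h := z - y; clearbody a h.
rewrite !dotvDr !dotvZr !dotv_mulmx trmxK !enorm_sqr !dotvDl !dotvDr.
by rewrite (dotvC L lam) (dotvC h a); field.
Qed.

Lemma FsubB (c : R) (s xi y z : 'cV[R]_n) (Q : 'M[R]_n) (phi : 'cV[R]_n -> R) :
  Q^T = Q ->
  Fsub c s xi Q phi z - Fsub c s xi Q phi y =
  dotv xi (z - y) + dotv (Q *m (y - s)) (z - y) + dotv (z - y) (Q *m (z - y)) / 2
  + phi z - phi y.
Proof.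
move=> QT; rewrite /Fsub.
have -> : z - s = (y - s) + (z - y) by rewrite [RHS]addrC addrA subrK.
set a := y - s; set h := z - y; clearbody a h.
rewrite !mulmxDr !(dotvDl a, dotvDr a, dotvDr h, dotvDr xi).
by rewrite (dotv_mulmx _ Q a h) QT (dotvC h (Q *m a)); field.
Qed.

(* The strong convexity of [Fsub] (modulus [mu]) compares the exact solution
   [xb] of the subproblem with the inexact one [y]; the approximate KKT
   conditions at [y] control the error. *)
Lemma inexact_subproblem_error {g} {c : R} {s y xb xi v : 'cV[R]_n} {Q : 'M[R]_n}
    {phi : 'cV[R]_n -> R} {V L lam} {mu bC bS : R} :
  0 <= mu -> Q^T = Q -> (forall d, mu * enorm d ^+ 2 <= dotv d (Q *m d)) ->
  (forall u, phi y + dotv v (u - y) <= phi u) ->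
  (forall i, 0 <= lam i 0) -> (forall i, 0 <= L i 0) ->
  nonpos (Gmodel g xb s V L) ->
  Fsub c s xi Q phi xb <= Fsub c s xi Q phi s ->
  Num.max (- dotv lam (Gmodel g y s V L)) 0 + posinf_norm (Gmodel g y s V L)
    <= bC / 2 * enorm (y - s) ^+ 2 ->
  enorm (xi + Q *m (y - s) + v + V *m lam + dotv L lam *: (y - s))
    <= bS * enorm (y - s) ->
  mu / 2 * enorm (xb - y) ^+ 2 <=
    phi s - phi y - dotv xi (y - s) + bC / 2 * enorm (y - s) ^+ 2
    + bS * enorm (y - s) * enorm (xb - y).
Proof.
move=> mu0 QT HQ Hsub lam0 L0 xb_feas xb_opt Hcomp Hstat.
have G1 := dotv_GmodelB g s y xb V L lam.
have F1 := FsubB c s xi y xb Q phi QT.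
have Hq := HQ (xb - y).
have Hqa := HQ (y - s).
have Hphi := Hsub xb.
have SL : 0 <= dotv L lam by rewrite /dotv sumr_ge0 // => i _; rewrite mulr_ge0.
have ST : 0 <= dotv L lam * (enorm (xb - y) ^+ 2 / 2).
  by rewrite mulr_ge0 // divr_ge0 // sqr_ge0.
have Hn : dotv lam (Gmodel g xb s V L) <= 0 by exact: dotv_le0.
have Hc : - dotv lam (Gmodel g y s V L) <= bC / 2 * enorm (y - s) ^+ 2.
  apply: le_trans Hcomp; rewrite -[X in X <= _]addr0.
  by rewrite lerD ?posinf_norm_ge0 // le_max lexx.
have Hcs : - (bS * enorm (y - s) * enorm (xb - y)) <=
    dotv (xi + Q *m (y - s) + v + V *m lam + dotv L lam *: (y - s)) (xb - y).
  rewrite lerNl; apply: le_trans (ler_norm (- _)) _; rewrite normrN.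
  by apply: le_trans (norm_dotv_le _ _) _; apply: ler_wpM2r => //; exact: enorm_ge0.
rewrite !dotvDl dotvZl in Hcs.
have Fs : Fsub c s xi Q phi s = c + phi s.
  by rewrite /Fsub subrr dotv0r mulmx0 dotv0r mul0r !addr0.
have Fy : Fsub c s xi Q phi y =
    c + dotv xi (y - s) + dotv (y - s) (Q *m (y - s)) / 2 + phi y by [].
have m0 : 0 <= mu * enorm (y - s) ^+ 2 by rewrite mulr_ge0 ?sqr_ge0.
rewrite Fs in xb_opt.
rewrite mulrAC.
move: G1 F1 Hq Hqa Hphi ST Hn Hc Hcs xb_opt Fy m0.
set A1 := dotv lam _; set A2 := dotv lam _; set A3 := dotv L lam * _.
set A4 := dotv L lam * _; set A5 := mu * _; set A6 := mu * _.
set A7 := bC / 2 * _; set A8 := bS * _ * _.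
move=> *; lra.
Qed.

End Subproblem.

Lemma lt_of_sqr_le_affine {R : realFieldType} {c a b e eps : R} : 0 < c -> 0 < eps ->
  c * e ^+ 2 <= a + b * e -> a < c * eps ^+ 2 / 2 -> b <= c * eps / 2 -> e < eps.
Proof.
move=> c0 eps0 Hq Ha Hb; rewrite ltNge; apply/negP => He.
have c0w := ltW c0; have eps0w := ltW eps0.
have e0 : 0 <= e := le_trans eps0w He.
have Hbe : b * e <= c * eps / 2 * e by rewrite ler_wpM2r.
have Hee : c * eps * e <= c * e * e by rewrite ler_wpM2r // ler_wpM2l.
have Hsq : c * eps ^+ 2 <= c * e ^+ 2 by rewrite ler_wpM2l // ler_sqr.
move: Hq Ha Hbe Hee Hsq; rewrite !expr2 !mulrA; lra.
Qed.

Section IMBA.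
Context {R : realType} {n m : nat}.
Context {g0 : 'cV[R]_n -> \bar R} {g : 'I_m -> 'cV[R]_n -> R} {phi : 'cV[R]_n -> R}.
Context {mu_min M beta_C beta_S alpha tau cF c : R}.
Context {x xi : nat -> 'cV[R]_n} {V : nat -> 'M[R]_(n, m)}.
Context {mu : nat -> nat -> R} {L : nat -> nat -> 'cV[R]_m} {Q : nat -> nat -> 'M[R]_n}.
Context {xbar y v : nat -> nat -> 'cV[R]_n} {lam : nat -> nat -> 'cV[R]_m}.
Context {jk : nat -> nat}.

Hypotheses (mu_min_gt0 : 0 < mu_min) (beta_C_gt0 : 0 < beta_C)
  (beta_S_gt0 : 0 < beta_S) (alpha_gt0 : 0 < alpha) (tau_gt1 : 1 < tau).
Hypothesis g_lip : forall i z, loc_lipschitz_at (fun w => (g i w)%:E) z.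
Hypothesis g0_lip : forall z, nonpos (gvec g z) -> loc_lipschitz_at g0 z.
Hypothesis phi_cvx : cvx_fun phi.
Hypothesis F_lb : forall z, nonpos (gvec g z) -> (cF%:E <= Fobj g0 g phi z)%E.
Hypothesis x_bounded : forall k, enorm (x k) <= c.

Hypothesis hx0 : nonpos (gvec g (x 0%N)).
Hypothesis hxi : forall k, limiting_subdiff g0 (x k) (xi k).
Hypothesis hmu0 : forall k, mu_min <= mu k 0%N.
Hypothesis hL0 : forall k i, 0 <= L k 0%N i 0.
Hypothesis hQ : forall k j, (j <= jk k)%N ->
  (Q k j)^T = Q k j /\
  forall d : 'cV[R]_n, mu k j * enorm d ^+ 2 <= dotv d (Q k j *m d)
                         <= (mu k j + M) * enorm d ^+ 2.
Hypothesis hxbar : forall k j, (j <= jk k)%N ->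
  nonpos (Gmodel g (xbar k j) (x k) (V k) (L k j)) /\
  forall z, nonpos (Gmodel g z (x k) (V k) (L k j)) ->
    Fsub (fine (g0 (x k))) (x k) (xi k) (Q k j) phi (xbar k j)
    <= Fsub (fine (g0 (x k))) (x k) (xi k) (Q k j) phi z.
Hypothesis hinexact : forall k j, (j <= jk k)%N ->
  [/\ limiting_subdiff (fun w => (phi w)%:E) (y k j) (v k j),
      forall i : 'I_m, 0 <= lam k j i 0,
      Fsub (fine (g0 (x k))) (x k) (xi k) (Q k j) phi (y k j)
        <= Fsub (fine (g0 (x k))) (x k) (xi k) (Q k j) phi (x k),
      Num.max (- dotv (lam k j) (Gmodel g (y k j) (x k) (V k) (L k j))) 0
        + posinf_norm (Gmodel g (y k j) (x k) (V k) (L k j))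
        <= beta_C / 2 * enorm (y k j - x k) ^+ 2 &
      enorm (xi k + Q k j *m (y k j - x k) + v k j + V k *m lam k j
             + dotv (L k j) (lam k j) *: (y k j - x k))
        <= beta_S * enorm (y k j - x k)].
Hypothesis hreject : forall k j, (j < jk k)%N ->
  ~ (nonpos (gvec g (y k j)) /\
     (Fobj g0 g phi (y k j)
        <= Fobj g0 g phi (x k) - (alpha / 2 * enorm (y k j - x k) ^+ 2)%:E)%E) /\
  ((~ nonpos (gvec g (y k j)) /\ L k j.+1 = tau *: L k j /\ mu k j.+1 = mu k j) \/
   (nonpos (gvec g (y k j)) /\ L k j.+1 = L k j /\ mu k j.+1 = tau * mu k j)).
Hypothesis haccept : forall k,
  nonpos (gvec g (y k (jk k))) /\
  (Fobj g0 g phi (y k (jk k))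
     <= Fobj g0 g phi (x k) - (alpha / 2 * enorm (y k (jk k) - x k) ^+ 2)%:E)%E.
Hypothesis hxnext : forall k, x k.+1 = y k (jk k).

Lemma iterates_feasible k : nonpos (gvec g (x k)).
Proof. by elim: k => [//|k _]; rewrite hxnext; exact: (haccept k).1. Qed.

Lemma mu_ge_min k j : (j <= jk k)%N -> mu_min <= mu k j.
Proof.
elim: j => [_|j IH Hj]; first exact: hmu0.
have mu_kj := IH (ltnW Hj).
have [_ [[_ [_ ->]] | [_ [_ ->]]]] := hreject _ _ Hj => //.
have mu_kj0 : 0 <= mu k j := le_trans (ltW mu_min_gt0) mu_kj.
by apply: le_trans mu_kj _; rewrite ler_peMl // ltW.
Qed.

Lemma L_ge0 k j : (j <= jk k)%N -> forall i, 0 <= L k j i 0.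
Proof.
elim: j => [_|j IH Hj] i; first exact: hL0.
have L_kj := IH (ltnW Hj) i.
have [_ [[_ [-> _]] | [_ [-> _]]]] := hreject _ _ Hj => //.
by rewrite mxE mulr_ge0 // ltW // (lt_trans ltr01).
Qed.

Definition Fval k := fine (g0 (x k)) + phi (x k).

Lemma Fobj_iterate k : Fobj g0 g phi (x k) = (Fval k)%:E.
Proof.
rewrite /Fobj /Fval asboolT; last exact: iterates_feasible.
by have [+ _] := hxi k; case: (g0 (x k)) => //= r _; rewrite adde0.
Qed.

Lemma sufficient_decrease k :
  alpha / 2 * enorm (x k.+1 - x k) ^+ 2 <= Fval k - Fval k.+1.
Proof.
have := (haccept k).2; rewrite -hxnext !Fobj_iterate -EFinB lee_fin; lra.
Qed.

Lemma Fval_decrease_ge0 k : 0 <= Fval k - Fval k.+1.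
Proof.
apply: le_trans (sufficient_decrease k).
by rewrite mulr_ge0 ?sqr_ge0 // divr_ge0 // ltW.
Qed.

(* The partial sums telescope to [Fval 0 - Fval N <= Fval 0 - cF]. *)
Lemma Fval_decrease_cvg0 : (fun k => Fval k - Fval k.+1) @ \oo --> 0.
Proof.
apply: cvg_series_cvg_0; apply: nondecreasing_is_cvgn.
  by apply: nondecreasing_series => k _ _; exact: Fval_decrease_ge0.
exists (Fval 0%N - cF) => _ [N _ <-].
have -> : series (fun k => Fval k - Fval k.+1) N = Fval 0%N - Fval N.
  rewrite /series /= -opprB -(telescope_sumr _ (leq0n N)) -sumrN.
  by apply: eq_bigr => k _; rewrite opprB.
rewrite lerD2l lerN2.
by have := F_lb _ (iterates_feasible N); rewrite Fobj_iterate lee_fin.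
Qed.

Lemma step_cvg0 : (fun k => enorm (x k.+1 - x k)) @ \oo --> 0.
Proof.
apply/cvgr0Pnorm_lt => e e0.
have ae0 : 0 < alpha / 2 * e ^+ 2 by rewrite mulr_gt0 ?divr_gt0 ?exprn_gt0.
apply: filterS (cvgr0_ge0_lt Fval_decrease_ge0 Fval_decrease_cvg0 _ ae0) => k Hk.
have := le_lt_trans (sufficient_decrease k) Hk.
by rewrite ger0_norm ?enorm_ge0 // ltr_pM2l ?divr_gt0 // ltr_sqr ?nnegrE ?enorm_ge0 ?ltW.
Qed.

(* The Lipschitz constant of [g0] on the ball also bounds its limiting
   subgradient [xi k]. *)
Lemma next_error_bound {k} {p : 'cV[R]_n} {r Lc : R} :
  (forall a b, open_ball p r a -> open_ball p r b ->
     g0 a \is a fin_num /\ `|fine (g0 a) - fine (g0 b)| <= Lc * enorm (a - b)) ->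
  open_ball p r (x k) -> open_ball p r (x k.+1) ->
  mu_min / 2 * enorm (x k.+1 - xbar k (jk k)) ^+ 2 <=
    (Fval k - Fval k.+1) + 2 * `|Lc| * enorm (x k.+1 - x k)
    + beta_C / 2 * enorm (x k.+1 - x k) ^+ 2
    + beta_S * enorm (x k.+1 - x k) * enorm (x k.+1 - xbar k (jk k)).
Proof.
move=> HLc xk_in xk1_in.
have [Qsym Qb] := hQ _ _ (leqnn (jk k)).
have Qlb d := proj1 (andP (Qb d)).
have [Hv Hlam _ Hcomp Hstat] := hinexact _ _ (leqnn (jk k)).
have [xb_feas xb_opt] := hxbar _ _ (leqnn (jk k)).
have xb_opt_xk := xb_opt (x k); rewrite Gmodel_center in xb_opt_xk.
have mu_kj := mu_ge_min _ _ (leqnn (jk k)).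
have := inexact_subproblem_error (le_trans (ltW mu_min_gt0) mu_kj) Qsym Qlb
  (limiting_subdiff_cvx_ineq phi_cvx Hv) Hlam (L_ge0 _ _ (leqnn _)) xb_feas
  (xb_opt_xk (iterates_feasible k)) Hcomp Hstat.
rewrite -hxnext (enorm_distC (xbar k _)).
set d := enorm (x k.+1 - x k); set e := enorm (x k.+1 - xbar k (jk k)).
have mu_e : mu_min / 2 * e ^+ 2 <= mu k (jk k) / 2 * e ^+ 2.
  by rewrite ler_wpM2r ?sqr_ge0 // ler_pM2r.
have g0_step : fine (g0 (x k.+1)) - fine (g0 (x k)) <= `|Lc| * d.
  have [_ Hlip] := HLc _ _ xk1_in xk_in; rewrite -/d in Hlip.
  apply: le_trans (ler_norm _) _; apply: le_trans Hlip _.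
  by rewrite ler_wpM2r ?ler_norm // /d enorm_ge0.
have xi_step : - dotv (xi k) (x k.+1 - x k) <= `|Lc| * d.
  apply: le_trans (_ : _ <= `|dotv (xi k) (x k.+1 - x k)|) _.
    by rewrite -normrN ler_norm.
  apply: le_trans (norm_dotv_le _ _) _; rewrite ler_wpM2r ?enorm_ge0 //.
  exact: limiting_subdiff_lip_le HLc _ _ xk_in (hxi k).
rewrite /Fval in g0_step *; lra.
Qed.

(* Near a cluster point [p] of the iterates, [g0] is Lipschitz with a fixed
   constant, so the right-hand side of [next_error_bound] vanishes uniformly. *)
Lemma next_error_cvg0 : (fun k => enorm (x k.+1 - xbar k (jk k))) @ \oo --> 0.
Proof.
apply: (cvg0_of_cluster_points x_bounded) => [k|p px eps e0]; first exact: enorm_ge0.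
have [r r0 [Lc HLc]] := g0_lip _ (cluster_points_feasible g_lip iterates_feasible px).
set C := 2 * `|Lc| + beta_C / 2.
have C0 : 0 < C by rewrite ltr_wpDl ?mulr_ge0 ?divr_gt0.
set th := mu_min / 2 * eps ^+ 2 / 2.
have th0 : 0 < th by rewrite !(mulr_gt0, divr_gt0) ?exprn_gt0.
have th2 : 0 < th / 2 by rewrite divr_gt0.
have r2 : 0 < r / 2 by rewrite divr_gt0.
have d_lt e : 0 < e -> \forall k \near \oo, enorm (x k.+1 - x k) < e.
  exact: cvgr0_ge0_lt (fun _ => enorm_ge0 _) step_cvg0 e.
exists (r / 2) => //; near=> k => xk_near.
have d1 : enorm (x k.+1 - x k) < 1 by near: k; exact: d_lt.
have dr : enorm (x k.+1 - x k) < r / 2 by near: k; exact: d_lt.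
have dC : enorm (x k.+1 - x k) < th / 2 / C.
  by near: k; apply: d_lt; rewrite divr_gt0.
have dS : enorm (x k.+1 - x k) < mu_min / 2 * eps / 2 / beta_S.
  by near: k; apply: d_lt; do 2 apply: divr_gt0 => //; rewrite mulr_gt0 ?divr_gt0.
have dF : Fval k - Fval k.+1 < th / 2.
  by near: k; exact: cvgr0_ge0_lt Fval_decrease_ge0 Fval_decrease_cvg0 _ th2.
have xk_in : open_ball p r (x k).
  by apply: lt_trans xk_near _; rewrite ltr_pdivrMr // ltr_pMr // ltr1n.
have xk1_in : open_ball p r (x k.+1).
  rewrite /open_ball /=; apply: le_lt_trans (enorm_dist_triangle _ (x k) _) _.
  by rewrite [r]splitr ltrD.
apply: lt_of_sqr_le_affine _ _ (next_error_bound HLc xk_in xk1_in) _ _.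
- by rewrite divr_gt0.
- by [].
- set d := enorm (x k.+1 - x k) in d1 dC *.
  have d0 : 0 <= d := enorm_ge0 _.
  have dd : d ^+ 2 <= d by rewrite expr2; nra.
  move: dC; rewrite ltr_pdivlMr // => dC.
  have := ler_wpM2l (divr_ge0 (ltW beta_C_gt0) (ler0n _ 2)) dd.
  by move: dF dC; rewrite /C /th; lra.
- by move: dS; rewrite ltr_pdivlMr // mulrC => /ltW.
Unshelve. all: end_near.
Qed.

Lemma error_cvg0 : (fun k => enorm (x k - xbar k (jk k))) @ \oo --> 0.
Proof.
apply: (@squeeze_cvgr _ _ _ _ (fun=> 0) (fun k => enorm (x k.+1 - x k)
    + enorm (x k.+1 - xbar k (jk k)))); last 2 first.
- exact: cvg_cst.
- by rewrite -[0 in X in _ --> X](addr0 0); exact: cvgD step_cvg0 next_error_cvg0.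
near=> k; rewrite enorm_ge0 /=.
by rewrite (enorm_distC (x k.+1)) enorm_dist_triangle.
Unshelve. all: end_near.
Qed.

End IMBA.

Theorem lemma4p2 (R : realType) (n m : nat)
  (g0 : 'cV[R]_n -> \bar R) (g : 'I_m -> 'cV[R]_n -> R) (phi : 'cV[R]_n -> R)
  (O : set 'cV[R]_n)
  (* Assumption 1 *)
  (hg0 : forall z, g0 z != -oo%E)
  (hOopen : open O) (hOconv : cvx_set O)
  (hGammaO : forall z, nonpos (gvec g z) -> O z)
  (hGamma_ne : exists z, nonpos (gvec g z))
  (hg0reg : forall z, O z -> loc_lipschitz_at g0 z /\ upperC2_at g0 z)
  (hgreg : forall (i : 'I_m) z,
      loc_lipschitz_at (fun w => (g i w)%:E) z /\ upperC2_at (fun w => (g i w)%:E) z)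
  (hphi : cvx_fun phi)
  (hFlb : exists c : R, forall z, nonpos (gvec g z) -> (c%:E <= Fobj g0 g phi z)%E)
  (* parameters of iMBA *)
  (mu_min mu_max L_min L_max M beta_C beta_S alpha tau : R)
  (hpar : [/\ 0 < mu_min, mu_min <= mu_max, 0 < L_min, L_min <= L_max &
           [/\ 0 < M, 0 < beta_C, 0 < beta_S, 0 < alpha & 1 < tau]])
  (* sequences generated by iMBA *)
  (x xi : nat -> 'cV[R]_n) (V : nat -> 'M[R]_(n, m))
  (mu : nat -> nat -> R) (L : nat -> nat -> 'cV[R]_m) (Q : nat -> nat -> 'M[R]_n)
  (xbar y v : nat -> nat -> 'cV[R]_n) (lam : nat -> nat -> 'cV[R]_m)
  (jk : nat -> nat)
  (hx0 : nonpos (gvec g (x 0%N)))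
  (hxi : forall k, limiting_subdiff g0 (x k) (xi k))
  (hV : forall k (i : 'I_m), limiting_subdiff (fun w => (g i w)%:E) (x k) (col i (V k)))
  (hmu0 : forall k, mu_min <= mu k 0%N <= mu_max)
  (hL0 : forall k (i : 'I_m), L_min <= L k 0%N i 0 <= L_max)
  (hQ : forall k j, (j <= jk k)%N ->
      (Q k j)^T = Q k j /\
      forall d : 'cV[R]_n, mu k j * enorm d ^+ 2 <= dotv d (Q k j *m d)
                             <= (mu k j + M) * enorm d ^+ 2)
  (hxbar : forall k j, (j <= jk k)%N ->
      nonpos (Gmodel g (xbar k j) (x k) (V k) (L k j)) /\
      forall z, nonpos (Gmodel g z (x k) (V k) (L k j)) ->
        Fsub (fine (g0 (x k))) (x k) (xi k) (Q k j) phi (xbar k j)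
        <= Fsub (fine (g0 (x k))) (x k) (xi k) (Q k j) phi z)
  (hinexact : forall k j, (j <= jk k)%N ->
      [/\ limiting_subdiff (fun w => (phi w)%:E) (y k j) (v k j),
          forall i : 'I_m, 0 <= lam k j i 0,
          Fsub (fine (g0 (x k))) (x k) (xi k) (Q k j) phi (y k j)
            <= Fsub (fine (g0 (x k))) (x k) (xi k) (Q k j) phi (x k),
          Num.max (- dotv (lam k j) (Gmodel g (y k j) (x k) (V k) (L k j))) 0
            + posinf_norm (Gmodel g (y k j) (x k) (V k) (L k j))
            <= beta_C / 2 * enorm (y k j - x k) ^+ 2 &
          enorm (xi k + Q k j *m (y k j - x k) + v k j + V k *m lam k j
                 + dotv (L k j) (lam k j) *: (y k j - x k))
            <= beta_S * enorm (y k j - x k)])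
  (hreject : forall k j, (j < jk k)%N ->
      ~ (nonpos (gvec g (y k j)) /\
         (Fobj g0 g phi (y k j)
            <= Fobj g0 g phi (x k) - (alpha / 2 * enorm (y k j - x k) ^+ 2)%:E)%E) /\
      ((~ nonpos (gvec g (y k j)) /\ L k j.+1 = tau *: L k j /\ mu k j.+1 = mu k j) \/
       (nonpos (gvec g (y k j)) /\ L k j.+1 = L k j /\ mu k j.+1 = tau * mu k j)))
  (haccept : forall k,
      nonpos (gvec g (y k (jk k))) /\
      (Fobj g0 g phi (y k (jk k))
         <= Fobj g0 g phi (x k) - (alpha / 2 * enorm (y k (jk k) - x k) ^+ 2)%:E)%E)
  (hxnext : forall k, x k.+1 = y k (jk k))
  (* Assumption 2 *)
  (hA2 : forall k j, (j <= jk k)%N ->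
      metric_subregular
        (fun z => [set w | nonpos (Gmodel g z (x k) (V k) (L k j) - w)])
        (xbar k j) 0)
  (* Assumption 3 *)
  (hA3 : exists c : R, forall k, enorm (x k) <= c) :
  cluster_points x !=set0 /\ compact (cluster_points x) /\
  (fun k => enorm (x k - xbar k (jk k))) @ \oo --> 0 /\
  (fun k => enorm (x k.+1 - xbar k (jk k))) @ \oo --> 0.
Proof.
case: hpar => mu_min_gt0 _ L_min_gt0 _ [_ beta_C_gt0 beta_S_gt0 alpha_gt0 tau_gt1].
have [c x_bounded] := hA3.
have [cF F_lb] := hFlb.
have g_lip i z := (hgreg i z).1.
have g0_lip z z_feas := (hg0reg z (hGammaO z z_feas)).1.
have mu0_ge k : mu_min <= mu k 0%N by case/andP: (hmu0 k).
have L0_ge0 k i : 0 <= L k 0%N i 0.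
  by case/andP: (hL0 k i) => + _; apply: le_trans; exact: ltW.
split; first exact: cluster_points_neq0 x_bounded.
split; first exact: compact_cluster_points x_bounded.
split.
- exact: (error_cvg0 mu_min_gt0 beta_C_gt0 beta_S_gt0 alpha_gt0 tau_gt1 g_lip g0_lip
    hphi F_lb x_bounded hx0 hxi mu0_ge L0_ge0 hQ hxbar hinexact hreject haccept hxnext).
- exact: (next_error_cvg0 mu_min_gt0 beta_C_gt0 beta_S_gt0 alpha_gt0 tau_gt1 g_lip
    g0_lip hphi F_lb x_bounded hx0 hxi mu0_ge L0_ge0 hQ hxbar hinexact hreject haccept
    hxnext).
Qed.
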